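(* Let $G$ be a hypo-unique domination graph of order at least $3$. Then: (i) for every $x\in V(G)$, the graph $G-x$ has no $\gamma$-critical vertices; (ii) for every pair of distinct vertices $x,y$ of $G$, $\gamma(G-\{x,y\})\geq \gamma(G)-1$, and equality holds at least when $y$ does not belong to the unique $\gamma$-set of $G-x$.
   Context: All graphs are finite, simple and undirected. A set $D\subseteq V(G)$ is dominating if every vertex of $G$ not in $D$ has a neighbor in $D$; $\gamma(G)$ is the minimum size of a dominating set, and a dominating set of size $\gamma(G)$ is a $\gamma$-set. A vertex $v$ of a graph $H$ is $\gamma$-critical in $H$ if $\gamma(H-v)<\gamma(H)$. $G$ is a hypo-unique domination graph if $G$ has at least two $\gamma$-sets but for every $v\in V(G)$ the graph $G-v$ has exactly one $\gamma$-set. *)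

(* A simple graph is a symmetric irreflexive relation e on a finType T.
   Induced subgraphs are represented by their vertex set S : {set T}
   (G[S]); so G - v is G[~: [set v]] and G - {x,y} is G[~: [set x; y]]. *)
From mathcomp Require Import all_boot.
Set Implicit Arguments. Unset Strict Implicit. Unset Printing Implicit Defensive.

Section Dom.
Variable T : finType.
Variable e : rel T.

Definition dominating (S D : {set T}) : bool :=
  (D \subset S) && [forall v in S :\: D, [exists u in D, e u v]].

(* domination number of G[S]: minimum size of a dominating set
   (S itself dominates G[S], so #|S| is a valid initial bound) *)
Definition gamma (S : {set T}) : nat :=
  \big[minn/#|S|]_(D : {set T} | dominating S D) #|D|.

Definition gamma_set (S D : {set T}) : bool :=
  dominating S D && (#|D| == gamma S).

Definition gamma_critical (S : {set T}) (v : T) : bool :=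
  (v \in S) && (gamma (S :\ v) < gamma S).

Definition hypo_unique : Prop :=
  1 < #|[set D | gamma_set [set: T] D]| /\
  forall v : T, #|[set D | gamma_set (~: [set v]) D]| = 1.
End Dom.

(* If G[S] has a unique gamma-set, every gamma-critical vertex v of G[S] is
   isolated in G[S]: for a gamma-set D of G[S] - v and a neighbour u of v, both
   D + v and D + u would be gamma-sets of G[S].  Applied to G - x, this reduces
   (i) to two facts: G has no isolated vertex, and every vertex of G is
   gamma-critical (a vertex v pendant at x forces gamma(G) <= gamma(G - x)).
   Part (ii) then follows from gamma(G - x) = gamma(G) - 1.

   For criticality, assume gamma(G - z) >= gamma(G).  Then all gamma-sets of G
   but at most one contain z, and a neighbour of z that is not pendant at z is
   again non-critical.  Playing two gamma-sets against each other shows that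
   the private neighbours of z with respect to a gamma-set containing z are
   pendant at z.  Hence G has exactly two gamma-sets: the unique gamma-set Dz
   of G - z, and z added to Dz minus the single pendant vertex at z; together
   they cover V.  Deleting any other vertex y of Dz from both gives two
   gamma-sets of G - y, so G has at most two vertices. *)

From mathcomp Require Import all_boot zify.
Set Implicit Arguments. Unset Strict Implicit. Unset Printing Implicit Defensive.

Section Domination.
Variable T : finType.
Variable e : rel T.
Hypothesis e_sym : symmetric e.
Hypothesis e_irr : irreflexive e.

Implicit Types (S A B D : {set T}) (u v w : T).

Lemma edge_neq u v : e u v -> u != v.
Proof. by apply: contraTneq => ->; rewrite e_irr. Qed.

Lemma dominatingP S D :
  reflect (D \subset S /\ forall w, w \in S -> w \notin D -> exists2 u, u \in D & e u w)
          (dominating e S D).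
Proof.
apply: (iffP andP) => -[sDS domD]; split => //.
- move=> w wS wD; have /implyP := forallP domD w.
  by rewrite inE wD wS => /(_ isT) /existsP[u /andP[uD euw]]; exists u.
- apply/forallP => w; apply/implyP; rewrite inE => /andP[wD wS].
  by have [u uD euw] := domD w wS wD; apply/existsP; exists u; rewrite uD.
Qed.

Lemma gamma_le S D : dominating e S D -> gamma e S <= #|D|.
Proof.
move=> domD; rewrite /gamma; have := mem_index_enum D.
elim: (index_enum _) => //= D' r IHr; rewrite big_cons inE => /predU1P[<-|Dr].
  by rewrite domD geq_minl.
by case: ifP => // _; rewrite ?geq_min IHr ?orbT.
Qed.

Lemma gamma_set_exists S : exists D, gamma_set e S D.
Proof.
rewrite /gamma_set /gamma.
elim/big_rec: _ => [|D m domD [D' /andP[domD' /eqP cD']]].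
  by exists S; rewrite eqxx andbT; apply/dominatingP; split=> // w ->.
by case: (leqP #|D| m) => _; [exists D; rewrite domD | exists D'; rewrite domD' cD']; rewrite eqxx.
Qed.

Lemma gamma_set_dom S D : gamma_set e S D -> dominating e S D.
Proof. by case/andP. Qed.

Lemma gamma_set_card S D : gamma_set e S D -> #|D| = gamma e S.
Proof. by case/andP=> _ /eqP. Qed.

Lemma dominating_gamma_set S D : dominating e S D -> #|D| <= gamma e S -> gamma_set e S D.
Proof. by move=> domD DS; rewrite /gamma_set domD eqn_leq DS gamma_le. Qed.

Lemma dominating_restr S S' D :
  dominating e S D -> D \subset S' -> S' \subset S -> dominating e S' D.
Proof.
move=> /dominatingP[_ domD] sDS' sS'S; apply/dominatingP; split=> // w wS'.
exact: domD (subsetP sS'S w wS').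
Qed.

Lemma dominating_setU S A B D :
  dominating e (S :\: A) D -> A \subset B -> B \subset S -> dominating e S (D :|: B).
Proof.
move=> /dominatingP[sDS domD] sAB sBS; apply/dominatingP; split.
  by rewrite subUset sBS (subset_trans sDS) ?subsetDl.
move=> w wS; rewrite in_setU negb_or => /andP[wD wB].
have [u uD euw] : exists2 u, u \in D & e u w.
  by apply: domD wD; rewrite inE wS andbT; apply: contra wB; apply: subsetP.
by exists u; rewrite ?in_setU ?uD.
Qed.

Lemma dominating_setU1 S D u v : dominating e (S :\ v) D -> v \in S -> u \in S ->
  (u = v \/ e u v) -> dominating e S (u |: D).
Proof.
move=> /dominatingP[sDS domD] vS uS uv; apply/dominatingP; split.
  by rewrite subUset sub1set uS (subset_trans sDS) ?subsetDl.
move=> w wS; rewrite in_setU1 negb_or => /andP[wu wD].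
have [wv|wv] := eqVneq w v.
  by case: uv => [uv|euv]; [rewrite uv -wv eqxx in wu | exists u; rewrite ?setU11 ?wv].
have [x xD exw] : exists2 x, x \in D & e x w by apply: domD; rewrite ?inE ?wv.
by exists x; rewrite // in_setU1 xD orbT.
Qed.

Lemma dominating_setD1_nbr S D u v : dominating e (S :\ v) D -> u \in D -> e u v ->
  dominating e S D.
Proof.
move=> /dominatingP[sDS domD] uD euv; apply/dominatingP; split.
  exact: subset_trans sDS (subsetDl _ _).
move=> w wS wD; have [->|wv] := eqVneq w v; first by exists u.
by apply: domD; rewrite ?inE ?wv.
Qed.

Lemma gamma_le_setD1 S v : v \in S -> gamma e S <= (gamma e (S :\ v)).+1.
Proof.
move=> vS; have [D gD] := gamma_set_exists (S :\ v).
apply: leq_trans (gamma_le (dominating_setU1 (gamma_set_dom gD) vS vS (or_introl erefl))) _.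
by rewrite cardsU1 (gamma_set_card gD); case: (v \in D).
Qed.

Lemma gamma_set_setD1 S D v :
  gamma_set e S D -> v \notin D -> gamma e S <= gamma e (S :\ v) -> gamma_set e (S :\ v) D.
Proof.
move=> gD vD le; apply: dominating_gamma_set; last by rewrite (gamma_set_card gD).
apply: dominating_restr (gamma_set_dom gD) _ (subsetDl _ _).
have /dominatingP[sDS _] := gamma_set_dom gD.
by apply/subsetP=> t tD; rewrite !inE (subsetP sDS t tD) andbT; apply: contraNneq vD => <-.
Qed.

Lemma dominating_isolated S D v :
  dominating e S D -> v \in S -> (forall u, u \in S -> ~~ e u v) -> v \in D.
Proof.
move=> /dominatingP[sDS domD] vS iso; apply/negPn/negP => vD.
have [u uD euv] := domD v vS vD.
by rewrite (negbTE (iso u (subsetP sDS u uD))) in euv.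
Qed.

Definition priv_nbr S D v : {set T} :=
  [set p in S :\: D | e v p && [forall u in D, e u p ==> (u == v)]].

Lemma dominating_setD1_priv S D v : dominating e S D -> v \in D ->
  dominating e (S :\ v :\: priv_nbr S D v) (D :\ v).
Proof.
move=> /dominatingP[sDS domD] vD; apply/dominatingP; split.
  by apply/subsetP=> t /setD1P[tv tD]; rewrite !inE tv (subsetP sDS t tD) /= andbT tD.
move=> w; rewrite !inE => /and3P[wP wv wS]; rewrite wv /= => wD.
have [u uD euw] := domD w wS wD.
have [uv|uv] := eqVneq u v; last by exists u; rewrite // !inE uv.
move: wP; rewrite wD wS -uv euw /= => /forall_inPn[u' u'D].
by rewrite negb_imply => /andP[eu'w u'v]; exists u'; rewrite // !inE u'v.
Qed.

Lemma gamma_set_setD1_priv0 S D v : gamma_set e S D -> v \in D -> v \in S ->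
  priv_nbr S D v = set0 -> gamma_set e (S :\ v) (D :\ v).
Proof.
move=> gD vD vS priv0; apply: dominating_gamma_set.
  by have := dominating_setD1_priv (gamma_set_dom gD) vD; rewrite priv0 setD0.
have := gamma_le_setD1 vS; rewrite -(gamma_set_card gD) (cardsD1 v D) vD; lia.
Qed.

Definition pendants v : {set T} := [set p | e v p && [forall u, e u p ==> (u == v)]].

Definition unique_gamma_set S :=
  forall D1 D2, gamma_set e S D1 -> gamma_set e S D2 -> D1 = D2.

Lemma unique_gamma_set_critical S v u : unique_gamma_set S -> v \in S ->
  gamma e (S :\ v) < gamma e S -> u \in S -> u != v -> ~~ e u v.
Proof.
move=> uniqS vS crit uS uv; apply/negP => euv.
have [D gD] := gamma_set_exists (S :\ v); have domD := gamma_set_dom gD.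
have vD : v \notin D.
  by have /dominatingP[/subsetP sDS _] := domD; apply/negP => /sDS; rewrite !inE eqxx.
have [uD|uD] := boolP (u \in D).
  by have := gamma_le (dominating_setD1_nbr domD uD euv); rewrite (gamma_set_card gD) leqNgt crit.
have gU1 a : a \notin D -> (a = v \/ e a v) -> a \in S -> gamma_set e S (a |: D).
  move=> aD av aS; apply: dominating_gamma_set; first exact: dominating_setU1 domD vS aS av.
  by rewrite cardsU1 aD (gamma_set_card gD).
have /setP/(_ v) := uniqS _ _ (gU1 v vD (or_introl erefl) vS) (gU1 u uD (or_intror euv) uS).
by rewrite !in_setU1 eqxx (negbTE vD) eq_sym (negbTE uv).
Qed.

Lemma gamma_le_setD1_support S x v : x \in S -> v \in S -> e x v ->
  (forall u, u \in S -> e u v -> u = x) -> gamma e S <= gamma e (S :\ x).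
Proof.
move=> xS vS exv supp; have vx : v != x by rewrite eq_sym edge_neq.
have [D gD] := gamma_set_exists (S :\ x); have domD := gamma_set_dom gD.
have vD : v \in D.
  apply: dominating_isolated domD _ _; first by rewrite !inE vx.
  by move=> u /setD1P[ux uS]; apply: contra ux => /(supp u uS) ->.
have priv0 : priv_nbr (S :\ x) D v = set0.
  apply/setP=> p; rewrite !inE; apply/negP => /and3P[/and3P[_ px pS] evp _].
  by move: px; rewrite (supp p pS) ?eqxx // e_sym.
have domDv := dominating_setD1_priv domD vD; rewrite priv0 setD0 in domDv.
have xSv : x \in S :\ v by rewrite !inE eq_sym vx.
have domU : dominating e (S :\ v) (x |: D :\ v).
  by apply: (dominating_setU1 _ xSv xSv (or_introl erefl)); rewrite !setDDl setUC -setDDl.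
apply: leq_trans (gamma_le (dominating_setD1_nbr domU (setU11 x _) exv)) _.
by rewrite cardsU1 -(gamma_set_card gD) (cardsD1 v D) vD; case: (x \notin _).
Qed.

End Domination.

Section HypoUnique.
Variable T : finType.
Variable e : rel T.
Hypothesis e_sym : symmetric e.
Hypothesis e_irr : irreflexive e.
Hypothesis hG : hypo_unique e.

Local Notation gammaG := (gamma e [set: T]).

Lemma setC1D1C (x y : T) : ~: [set x] :\ y = ~: [set y] :\ x.
Proof. by apply/setP => t; rewrite !inE andbC. Qed.

Lemma unique_gamma_set_del y : unique_gamma_set e (~: [set y]).
Proof.
move=> D1 D2 g1 g2; have /eqP/cards1P[D0 gD0] := hG.2 y.
have /setP gD0' := gD0.
by have := gD0' D1; have := gD0' D2; rewrite !inE g1 g2 => /esym/eqP-> /esym/eqP->.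
Qed.

Lemma two_gamma_sets :
  exists D1 D2, [/\ gamma_set e [set: T] D1, gamma_set e [set: T] D2 & D1 != D2].
Proof.
have /card_gt1P[D1 [D2 [g1 g2 D12]]] := hG.1.
by exists D1, D2; rewrite !inE in g1 g2.
Qed.

Lemma noncritical_avoid y D1 D2 : gammaG <= gamma e (~: [set y]) ->
  gamma_set e [set: T] D1 -> gamma_set e [set: T] D2 -> y \notin D1 -> y \notin D2 -> D1 = D2.
Proof.
move=> le g1 g2 y1 y2; rewrite -setTD in le.
by apply: (unique_gamma_set_del (y := y)); rewrite -setTD; apply: gamma_set_setD1.
Qed.

Lemma mem_gamma_set y : exists2 D, gamma_set e [set: T] D & y \in D.
Proof.
have [D1 [D2 [g1 g2 D12]]] := two_gamma_sets.
have [y1|y1] := boolP (y \in D1); first by exists D1.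
have [y2|y2] := boolP (y \in D2); first by exists D2.
case: (leqP gammaG (gamma e (~: [set y]))) => [le|lt].
  by rewrite (noncritical_avoid le g1 g2 y1 y2) eqxx in D12.
have [D gD] := gamma_set_exists e (~: [set y]).
exists (y |: D); last exact: setU11.
apply: dominating_gamma_set.
  by apply: dominating_setU1 (or_introl erefl) => //; rewrite setTD (gamma_set_dom gD).
by rewrite cardsU1 (gamma_set_card gD); case: (y \notin D) => /=; lia.
Qed.

Lemma no_isolated v : exists u, e u v.
Proof.
case: (pickP (e^~ v)) => [u euv|iso]; first by exists u.
have [D1 [D2 [g1 g2 D12]]] := two_gamma_sets.
have vD D : gamma_set e [set: T] D -> v \in D.
  by move=> gD; apply: dominating_isolated (gamma_set_dom gD) _ _ => // u _; rewrite iso.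
have gDv D : gamma_set e [set: T] D -> gamma_set e (~: [set v]) (D :\ v).
  move=> gD; rewrite -setTD; apply: gamma_set_setD1_priv0 => //; first exact: vD.
  by apply/setP=> p; rewrite !inE e_sym iso !andbF.
have D12v := unique_gamma_set_del (gDv _ g1) (gDv _ g2).
by rewrite -(setD1K (vD _ g1)) -(setD1K (vD _ g2)) D12v eqxx in D12.
Qed.

Lemma deletion_critical_pendant x v : x != v ->
  gamma e (~: [set x] :\ v) < gamma e (~: [set x]) -> forall u, e u v -> u = x.
Proof.
move=> xv crit u euv; apply/eqP; apply: contraTT euv => ux.
have [->|uv] := eqVneq u v; first by rewrite e_irr.
by apply: unique_gamma_set_critical (@unique_gamma_set_del x) _ crit _ uv; rewrite !inE // eq_sym.
Qed.

(* A gamma-set of G - q smaller than gamma(G) cannot contain z, so it would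
   make q critical in G - z, i.e. pendant at z. *)
Lemma noncritical_nbr z q w : gammaG <= gamma e (~: [set z]) ->
  e z q -> w != z -> e w q -> gammaG <= gamma e (~: [set q]).
Proof.
move=> hz ezq wz ewq; rewrite leqNgt; apply/negP => crit.
have [D gD] := gamma_set_exists e (~: [set q]); have domD := gamma_set_dom gD.
have [zD|zD] := boolP (z \in D).
  have domG : dominating e [set: T] D by apply: dominating_setD1_nbr zD ezq; rewrite setTD.
  by have := gamma_le domG; rewrite (gamma_set_card gD) leqNgt crit.
have domD' : dominating e (~: [set z] :\ q) D.
  have /dominatingP[/subsetP sDS _] := domD.
  rewrite setC1D1C; apply: dominating_restr domD _ (subsetDl _ _); apply/subsetP => t tD.
  by rewrite in_setD1 sDS // andbT; apply: contraNneq zD => <-.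
have zq := edge_neq e_irr ezq.
have crit' : gamma e (~: [set z] :\ q) < gamma e (~: [set z]).
  by have := gamma_le domD'; rewrite (gamma_set_card gD); move: crit hz; lia.
by move: wz; rewrite (deletion_critical_pendant zq crit' ewq) eqxx.
Qed.

(* If q had a neighbour w other than z, q would be non-critical and E the only
   gamma-set avoiding q.  In any other gamma-set D, which contains q, every
   private neighbour of q lies in E and so equals z; then D - q shows q
   critical in G or in G - z. *)
Lemma noncritical_priv_pendant z E q : gammaG <= gamma e (~: [set z]) ->
  gamma_set e [set: T] E -> q \in priv_nbr e [set: T] E z -> forall w, e w q -> w = z.
Proof.
move=> hz gE /setIdP[/setDP[_ qE] /andP[ezq /forall_inP privq]] w ewq.
have [//|wz] := eqVneq w z; exfalso.
have ncq := noncritical_nbr hz ezq wz ewq.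
have [D gD DE] : exists2 D, gamma_set e [set: T] D & D != E.
  have [D1 [D2 [g1 g2 D12]]] := two_gamma_sets.
  by case: (eqVneq D1 E) => [D1E|]; [exists D2; rewrite // -D1E eq_sym | exists D1].
have qD : q \in D.
  by apply: contraNT DE => qD; apply/eqP; exact: noncritical_avoid ncq gD gE qD qE.
have privD : priv_nbr e [set: T] D q \subset [set z].
  apply/subsetP => p /setIdP[/setDP[_ pD] /andP[eqp _]]; rewrite inE.
  have pE : p \in E.
    case: (pickP (fun u => (u != q) && e u p)) => [u /andP[uq eup]|pend].
      have ncp := noncritical_nbr ncq eqp uq eup.
      by apply: contraNT DE => pE; apply/eqP; exact: noncritical_avoid ncp gD gE pD pE.
    have /dominatingP[_ domE] := gamma_set_dom gE.
    apply/negPn/negP => pE; have [u uE eup] := domE p (in_setT p) pE.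
    by move: (pend u); rewrite eup andbT => /negbFE/eqP uq; rewrite -uq uE in qE.
  by move/implyP: (privq p pE); apply; rewrite e_sym.
have domDq := dominating_setD1_priv (gamma_set_dom gD) qD.
have cardDq : #|D :\ q| < gammaG.
  by have := cardsD1 q D; rewrite qD (gamma_set_card gD) => ->.
move: privD; rewrite subset1 => /orP[/eqP Pz|/eqP P0].
  rewrite Pz setTD -setC1D1C in domDq.
  have zq := edge_neq e_irr ezq.
  have crit : gamma e (~: [set z] :\ q) < gamma e (~: [set z]).
    exact: leq_ltn_trans (gamma_le domDq) (leq_trans cardDq hz).
  by move: wz; rewrite (deletion_critical_pendant zq crit ewq) eqxx.
rewrite P0 setD0 setTD in domDq.
by have := leq_ltn_trans (gamma_le domDq) cardDq; rewrite ltnNge ncq.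
Qed.

Section NonCritical.
Variable z : T.
Hypothesis hz : gammaG <= gamma e (~: [set z]).
Variable Dz : {set T}.
Hypothesis gDz : gamma_set e (~: [set z]) Dz.

Local Notation L := (pendants e z).
Local Notation E0 := (z |: (Dz :\: L)).

Lemma notin_Dz : z \notin Dz.
Proof.
have /dominatingP[/subsetP sDz _] := gamma_set_dom gDz.
by apply/negP => /sDz; rewrite !inE eqxx.
Qed.

Lemma pendants_sub : L \subset Dz.
Proof.
apply/subsetP => v /setIdP[ezv /forallP pend].
apply: dominating_isolated (gamma_set_dom gDz) _ _.
  by rewrite !inE eq_sym (edge_neq e_irr).
by move=> u; rewrite !inE => uz; apply: contra uz => /(implyP (pend u)).
Qed.

Lemma gamma_pendants : gammaG + #|L| <= (gamma e (~: [set z])).+1.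
Proof.
have /dominatingP[_ domDz] := gamma_set_dom gDz.
have domE0 : dominating e [set: T] E0.
  apply/dominatingP; split=> [|w _]; first exact: subsetT.
  rewrite in_setU1 in_setD negb_or negb_and negbK => /andP[wz /orP[wL|wD]].
    by exists z; [exact: setU11 | case/setIdP: wL].
  have [u uD euw] : exists2 u, u \in Dz & e u w by apply: domDz wD; rewrite !inE.
  exists u => //; rewrite in_setU1 in_setD uD andbT; apply/orP; right.
  apply: contra wz => /setIdP[_ /forallP pend]; apply: (implyP (pend w)).
  by rewrite e_sym.
have := gamma_le domE0.
rewrite cardsU1 cardsD (setIidPr pendants_sub) (gamma_set_card gDz).
have := subset_leq_card pendants_sub; rewrite (gamma_set_card gDz).
by case: (z \notin _) => /=; lia.
Qed.

Lemma gamma_set_mem E : gamma_set e [set: T] E -> z \in E -> E = E0.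
Proof.
move=> gE zE.
have privL : priv_nbr e [set: T] E z \subset L.
  apply/subsetP => p pP; have /setIdP[_ /andP[ezp _]] := pP.
  apply/setIdP; split=> //; apply/forallP => u; apply/implyP.
  by move/(noncritical_priv_pendant hz gE pP) ->.
have sLS : L \subset [set: T] :\ z.
  by apply/subsetP => v /setIdP[ezv _]; rewrite !inE andbT eq_sym (edge_neq e_irr).
have := dominating_setU (dominating_setD1_priv (gamma_set_dom gE) zE) privL sLS.
rewrite setTD => domU.
have cardE : (#|E :\ z|).+1 = gammaG by rewrite -(gamma_set_card gE) (cardsD1 z E) zE.
have cardU := cardsU (E :\ z) L.
have ltI := gamma_pendants.
have gU : gamma_set e (~: [set z]) (E :\ z :|: L) by apply: dominating_gamma_set domU _; lia.
have UDz := unique_gamma_set_del gU gDz.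
have /eqP EL0 : (E :\ z) :&: L == set0.
  by rewrite -cards_eq0; move: cardU; rewrite UDz (gamma_set_card gDz); lia.
rewrite -UDz setDUl setDv setU0 (setDidPl _) ?setD1K //.
by rewrite -setI_eq0 EL0.
Qed.

Lemma gamma_set_cases D : gamma_set e [set: T] D -> D = E0 \/ D = Dz.
Proof.
move=> gD; have [zD|zD] := boolP (z \in D); first by left; exact: gamma_set_mem.
right; apply: unique_gamma_set_del gDz; rewrite -setTD.
by apply: gamma_set_setD1 gD zD _; rewrite setTD.
Qed.

Lemma gamma_sets_E0_Dz : gamma_set e [set: T] E0 /\ gamma_set e [set: T] Dz.
Proof.
have [D1 [D2 [g1 g2 D12]]] := two_gamma_sets.
have [c1 c2] := (gamma_set_cases g1, gamma_set_cases g2).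
by case: c1 c2 D12 g1 g2 => [->|->] [->|->]; rewrite ?eqxx.
Qed.

Lemma pendants_set1 : exists v, L = [set v].
Proof.
have [gE0 gDzG] := gamma_sets_E0_Dz; apply/cards1P.
have zDz : z \notin Dz :\: L by rewrite in_setD (negbTE notin_Dz) andbF.
move: (gamma_set_card gE0).
rewrite -(gamma_set_card gDzG) cardsU1 zDz cardsD (setIidPr pendants_sub).
by have := subset_leq_card pendants_sub; have := card_gt0 Dz; lia.
Qed.

Lemma mem_setU1_Dz w : w \in z |: Dz.
Proof.
have [D gD wD] := mem_gamma_set w.
case: (gamma_set_cases gD) wD => -> wD; last by rewrite in_setU1 wD orbT.
by apply: subsetP wD; rewrite setUS ?subsetDl.
Qed.

Lemma noncritical_card : #|T| <= 2.
Proof.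
rewrite leqNgt; apply/negP => big; have [gE0 gDzG] := gamma_sets_E0_Dz.
have [v Lv] := pendants_set1; rewrite Lv in gE0.
have vL : v \in L by rewrite Lv set11.
have vDz : v \in Dz := subsetP pendants_sub v vL.
have ezv : e z v by case/setIdP: vL.
have zDz := notin_Dz.
have [y /setD1P[yv yDz]] : exists y, y \in Dz :\ v.
  have cover : z |: Dz = [set: T] by apply/setP => w; rewrite in_setT mem_setU1_Dz.
  apply/set0Pn; rewrite -card_gt0; have := cardsD1 v Dz; rewrite vDz.
  by move: big; rewrite -cardsT -cover cardsU1 zDz; lia.
have zy : z != y by apply: contraNneq zDz => ->.
have gDzy : gamma_set e (~: [set y]) (Dz :\ y).
  rewrite -setTD; apply: gamma_set_setD1_priv0 gDzG yDz (in_setT y) _.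
  apply/eqP; rewrite -subset0; apply/subsetP.
  move=> p /setIdP[/setDP[_ pD] /andP[_ /forall_inP privp]].
  have /eqP pz : p == z by move: (mem_setU1_Dz p); rewrite in_setU1 (negbTE pD) orbF.
  by have := privp v vDz; rewrite pz e_sym ezv eq_sym (negbTE yv).
have gE0y : gamma_set e (~: [set y]) ((z |: (Dz :\ v)) :\ y).
  rewrite -setTD; apply: gamma_set_setD1_priv0 gE0 _ (in_setT y) _.
    by rewrite in_setU1 in_setD1 yv yDz orbT.
  apply/eqP; rewrite -subset0; apply/subsetP.
  move=> p /setIdP[/setDP[_ pE0] /andP[_ /forall_inP privp]].
  have /eqP pv : p == v.
    move: pE0 (mem_setU1_Dz p); rewrite !in_setU1 in_setD1 !negb_or => /andP[/negbTE-> /=].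
    by rewrite negb_and negbK => /orP[//|/negbTE->].
  by have := privp z (setU11 _ _); rewrite pv ezv (negbTE zy).
have /setP/(_ z) := unique_gamma_set_del gDzy gE0y.
by rewrite !inE (negbTE zDz) zy eqxx.
Qed.

End NonCritical.

Hypothesis hord : 3 <= #|T|.

Lemma vertex_critical z : gamma e (~: [set z]) < gammaG.
Proof.
rewrite ltnNge; apply/negP => hz; have [Dz gDz] := gamma_set_exists e (~: [set z]).
by have := noncritical_card hz gDz; rewrite leqNgt hord.
Qed.

Lemma deletion_no_critical x v : ~~ gamma_critical e (~: [set x]) v.
Proof.
apply/andP => -[vS crit].
have nbr := unique_gamma_set_critical (@unique_gamma_set_del x) vS crit.
have supp u : e u v -> u = x.
  move=> euv; have uv := edge_neq e_irr euv.
  by apply/eqP; apply: contraTT euv => ux; apply: nbr; rewrite ?inE.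
have [u euv] := no_isolated v; have exv : e x v by rewrite -(supp u euv).
have := gamma_le_setD1_support e_sym e_irr (in_setT x) (in_setT v) exv (fun u _ => supp u).
by rewrite setTD leqNgt vertex_critical.
Qed.

Lemma deletion_pair x y : x != y ->
  gammaG <= (gamma e (~: [set x; y])).+1 /\
  (forall D, gamma_set e (~: [set x]) D -> y \notin D ->
     (gamma e (~: [set x; y])).+1 = gammaG).
Proof.
move=> xy; have -> : ~: [set x; y] = ~: [set x] :\ y.
  by apply/setP => t; rewrite !inE negb_or andbC.
have ge : gamma e (~: [set x]) <= gamma e (~: [set x] :\ y).
  by have := deletion_no_critical x y; rewrite /gamma_critical !inE eq_sym xy -leqNgt.
have low := gamma_le_setD1 e (in_setT x); rewrite setTD in low.
have cr := vertex_critical x.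
split=> [|D gD yD]; first lia.
have /dominatingP[/subsetP sD _] := gamma_set_dom gD.
have sDxy : D \subset ~: [set x] :\ y.
  by apply/subsetP => t tD; rewrite in_setD1 sD // andbT; apply: contraNneq yD => <-.
have := gamma_le (dominating_restr (gamma_set_dom gD) sDxy (subsetDl _ _)).
by rewrite (gamma_set_card gD); lia.
Qed.

End HypoUnique.

Theorem corollary3p3 (T : finType) (e : rel T)
  (e_sym : symmetric e) (e_irr : irreflexive e)
  (hord : 3 <= #|T|) (hG : hypo_unique e) :
  (forall x v : T, ~~ gamma_critical e (~: [set x]) v) /\
  (forall x y : T, x != y ->
     gamma e [set: T] <= (gamma e (~: [set x; y])).+1 /\
     (forall D : {set T}, gamma_set e (~: [set x]) D -> y \notin D ->
        (gamma e (~: [set x; y])).+1 = gamma e [set: T])).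
Proof.
split=> [x v|x y]; first exact: deletion_no_critical.
exact: deletion_pair.
Qed.
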